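(* Let $I$ and $J$ be two conserved intervals of $\mathcal{P}$. If there exists an element $f\in F_I\cap F_J$, then $\mathrm{Container}(I)=\mathrm{Container}(J)$.
   Context: Let $n\geq 2$ and let $\mathcal{P}=\{P_1,\ldots,P_K\}$ be signed permutations of $\{1,\ldots,n\}$: each $P_k$ is an ordering of $1,\ldots,n$ in which each element carries a sign $+$ or $-$. Assume $P_1=(+1,+2,\ldots,+n)$ and that every $P_k$ has first element $+1$ and last element $+n$. For integers $i\leq j$ write $(i..j)=\{i,\ldots,j\}$. A conserved interval of $\mathcal{P}$ is either a singleton, or a set $(a..c)$ with $a<c$ which (ignoring signs) occupies consecutive positions in every $P_k$ and which, in every $P_k$, has either $+a$ at its left end and $+c$ at its right end, or $-c$ at its left end and $-a$ at its right end. Two intervals $(i..j)$ and $(k..l)$ overlap if $i<k\leq j<l$ or $k<i\leq l<j$. A conserved interval is strong if it has at least two elements and overlaps no other conserved interval. For a conserved interval $I=(a..c)$, a set $\{f_1,\ldots,f_k\}$ with $a=f_1<\cdots<f_k=c$ is a set of frontiers of $I$ if $(f_i..f_j)$ is conserved for all $1\leq i<j\leq k$; $F_I$ denotes the unique inclusion-maximal set of frontiers of $I$ (the union of all sets of frontiers of $I$). $\mathrm{Container}(I)$ is the smallest strong conserved interval containing $I$. *)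

From mathcomp Require Import all_boot all_order all_algebra.
Set Implicit Arguments. Unset Strict Implicit. Unset Printing Implicit Defensive.
Import Order.TTheory GRing.Theory Num.Theory.
Local Open Scope ring_scope.

(* A signed permutation of {1..n} is a sequence of nonzero integers:
   the absolute value is the element, the sign is the sign. *)
Definition signed_perm (n : nat) (s : seq int) : Prop :=
  perm_eq (map absz s) (iota 1 n).

Definition id_sperm (n : nat) : seq int := [seq (i%:Z) | i <- iota 1 n].

Definition genome_family (n : nat) (P : seq (seq int)) : Prop :=
  (0 < size P)%N /\ nth [::] P 0 = id_sperm n /\
  (forall s, s \in P ->
     [/\ signed_perm n s, head 0 s = 1%:Z & last 0 s = n%:Z]).

Definition sinterval := (nat * nat)%type.

(* In the signed permutation s, the elements a..c (a < c) occupy consecutive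
   positions, with +a at the left end and +c at the right end, or -c at the
   left end and -a at the right end. *)
Definition conserved_in (s : seq int) (a c : nat) : Prop :=
  exists i : nat,
    let b := take (c - a).+1 (drop i s) in
    [/\ size b = (c - a).+1,
        perm_eq (map absz b) (iota a (c - a).+1) &
        (head 0 b = a%:Z /\ last 0 b = c%:Z) \/
        (head 0 b = - (c%:Z) /\ last 0 b = - (a%:Z))].

Definition conserved (n : nat) (P : seq (seq int)) (I : sinterval) : Prop :=
  (I.1 = I.2 /\ (1 <= I.1 <= n)%N) \/
  ((I.1 < I.2)%N /\ forall s, s \in P -> conserved_in s I.1 I.2).

Definition overlap (I J : sinterval) : Prop :=
  (I.1 < J.1 <= I.2 /\ I.2 < J.2)%N \/ (J.1 < I.1 <= J.2 /\ J.2 < I.2)%N.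

Definition strong (n : nat) (P : seq (seq int)) (I : sinterval) : Prop :=
  [/\ (I.1 < I.2)%N, conserved n P I &
      forall J, conserved n P J -> ~ overlap I J].

Definition frontier_set (n : nat) (P : seq (seq int)) (I : sinterval)
    (S : seq nat) : Prop :=
  [/\ I.1 \in S, I.2 \in S,
      (forall f, f \in S -> (I.1 <= f <= I.2)%N) &
      (forall x y, x \in S -> y \in S -> (x < y)%N -> conserved n P (x, y))].

Definition in_frontiers (n : nat) (P : seq (seq int)) (I : sinterval)
    (f : nat) : Prop :=
  exists S, frontier_set n P I S /\ f \in S.

Definition subinterval (I C : sinterval) : Prop := (C.1 <= I.1)%N /\ (I.2 <= C.2)%N.

Definition is_container (n : nat) (P : seq (seq int)) (I C : sinterval) : Prop :=
  [/\ strong n P C, subinterval I C &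
      forall D, strong n P D -> subinterval I D -> subinterval C D].

(* Take C1 \subset C2 (strong intervals sharing the point f cannot overlap, so
   they are nested).  If J stuck out of C1, say on the left, then the part of J
   between its left end and f would be a conserved interval overlapping C1; when
   f is the right end of C1 one first cuts C1 off, using that conserved
   intervals sharing an end differ by a conserved interval.  Hence J \subset C1,
   and minimality of C2 = Container(J) gives C2 \subset C1. *)

From mathcomp Require Import all_boot all_order all_algebra.
From mathcomp Require Import zify.

Set Implicit Arguments.
Unset Strict Implicit.
Unset Printing Implicit Defensive.

Definition abs_at (s : seq int) (j : nat) : nat := absz (nth 0%R s j).

Section SignedSequence.

Variable s : seq int.
Hypothesis s_uniq : uniq (map absz s).

Lemma abs_at_inj i j : i < size s -> j < size s ->
  abs_at s i = abs_at s j -> i = j.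
Proof.
move=> hi hj eij; apply/eqP.
by rewrite -(nth_uniq 0 _ _ s_uniq) ?size_map // !(nth_map 0%R) //; apply/eqP.
Qed.

Lemma abs_at_eq i j : i < size s -> j < size s ->
  j = i <-> abs_at s j = abs_at s i.
Proof. by move=> hi hj; split=> [-> // | /abs_at_inj]; apply. Qed.

Definition spans (p a c : nat) : Prop :=
  p + (c - a) < size s /\
  forall j, j < size s -> p <= j <= p + (c - a) <-> a <= abs_at s j <= c.

Definition end_signs (p a c : nat) : Prop :=
  (nth 0%R s p = Posz a /\ nth 0%R s (p + (c - a)) = Posz c) \/
  (nth 0%R s p = (- Posz c)%R /\ nth 0%R s (p + (c - a)) = (- Posz a)%R).

Lemma map_absz_block p L : p + L <= size s ->
  map absz (take L (drop p s)) = [seq abs_at s j | j <- iota p L].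
Proof.
move=> hs; have szL : size (take L (drop p s)) = L.
  by rewrite size_takel ?size_drop //; lia.
apply: (@eq_from_nth _ 0); first by rewrite !size_map szL size_iota.
move=> i; rewrite size_map szL => hi.
by rewrite !(nth_map 0%R) ?(nth_map 0) ?szL ?size_iota // nth_take // nth_drop nth_iota.
Qed.

Lemma perm_block_iota p a L : p + L <= size s ->
  perm_eq [seq abs_at s j | j <- iota p L] (iota a L) <->
  forall j, j < size s -> p <= j < p + L <-> a <= abs_at s j < a + L.
Proof.
move=> hs; split=> [pe j hj | spanL].
  split=> [hj' | ha].
    have : abs_at s j \in iota a L by rewrite -(perm_mem pe) map_f // mem_iota.
    by rewrite mem_iota.
  have : abs_at s j \in [seq abs_at s j | j <- iota p L].
    by rewrite (perm_mem pe) mem_iota.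
  move/mapP=> [k]; rewrite mem_iota => hk /abs_at_inj ->; lia.
have U : uniq [seq abs_at s j | j <- iota p L].
  rewrite map_inj_in_uniq ?iota_uniq // => i k; rewrite !mem_iota => hi hk.
  apply: abs_at_inj; lia.
have sub : {subset [seq abs_at s j | j <- iota p L] <= iota a L}.
  by move=> x /mapP[j]; rewrite !mem_iota => hj ->; apply/spanL; lia.
have [|_ eq_mem] := uniq_min_size U sub; first by rewrite size_map !size_iota.
by apply: uniq_perm; rewrite ?iota_uniq.
Qed.

Lemma block_ends p L : p + L.+1 <= size s ->
  head 0%R (take L.+1 (drop p s)) = nth 0%R s p /\
  last 0%R (take L.+1 (drop p s)) = nth 0%R s (p + L).
Proof.
move=> hs; split; first by rewrite -nth0 nth_take // nth_drop addn0.
by rewrite -nth_last size_takel ?size_drop /= ?nth_take // ?nth_drop //; lia.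
Qed.

Lemma conserved_inP a c : a <= c ->
  conserved_in s a c <-> exists p, spans p a c /\ end_signs p a c.
Proof.
move=> ac; split=> [[p [sz pe ends]] | [p [[hs spanP] ends]]].
  have hs : p + (c - a).+1 <= size s by move: sz; rewrite size_take_min size_drop; lia.
  move: pe; rewrite map_absz_block // perm_block_iota // => spanP.
  exists p; split; first by split=> [|j /spanP]; lia.
  by rewrite /end_signs; have [<- <-] := block_ends hs.
have hs' : p + (c - a).+1 <= size s by lia.
exists p; split; first by rewrite size_takel ?size_drop //; lia.
  by rewrite map_absz_block // perm_block_iota // => j /spanP; lia.
by have [-> ->] := block_ends hs'.
Qed.

Hypothesis s_nz : 0%R \notin s.

Lemma no_opposite_entries i j x : i < size s -> j < size s ->
  nth 0%R s i = Posz x -> nth 0%R s j = (- Posz x)%R -> False.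
Proof.
move=> hi hj ei ej.
have eij : j = i by apply: abs_at_inj; rewrite // /abs_at ei ej abszN.
have x0 : x = 0 by move: ej; rewrite eij ei; lia.
by move: (mem_nth 0%R hi); rewrite ei x0 (negPf s_nz).
Qed.

(* Both blocks have the shared element at an end, with the same sign there since
   entries are nonzero; the blocks then meet exactly at the position of b. *)
Lemma conserved_in_trim_left a b c : a < b < c ->
  conserved_in s a b -> conserved_in s a c -> conserved_in s b c.
Proof.
move=> abc; rewrite !conserved_inP; try lia.
move=> [i [[hi small] ends_ab]] [k [[hk big] ends_ac]].
case: ends_ab => [[ia ib] | [ib ia]]; case: ends_ac => [[ka kc] | [kc ka]].
- have ik : i = k by apply: abs_at_inj; [lia | lia | by rewrite /abs_at ia ka].
  subst i; have at_b := @abs_at_eq (k + (b - a)).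
  exists (k + (b - a)); split.
    split=> [|j hj]; first lia.
    by move: (small j hj) (big j hj) (at_b j ltac:(lia) hj); rewrite /abs_at ib /=; lia.
  by left; have -> : k + (b - a) + (c - b) = k + (c - a) by lia.
- by case: (no_opposite_entries _ _ ia ka); lia.
- by case: (no_opposite_entries _ _ ka ia); lia.
- have ik : i + (b - a) = k + (c - a).
    by apply: abs_at_inj; [lia | lia | by rewrite /abs_at ia ka].
  have at_b := @abs_at_eq i.
  exists k; split.
    split=> [|j hj]; first lia.
    by move: (small j hj) (big j hj) (at_b j ltac:(lia) hj); rewrite /abs_at ib abszN; lia.
  by right; have -> : k + (c - b) = i by lia.
Qed.

Lemma conserved_in_trim_right a b c : a < b < c ->
  conserved_in s b c -> conserved_in s a c -> conserved_in s a b.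
Proof.
move=> abc; rewrite !conserved_inP; try lia.
move=> [i [[hi small] ends_bc]] [k [[hk big] ends_ac]].
case: ends_bc => [[ib ic] | [ic ib]]; case: ends_ac => [[ka kc] | [kc ka]].
- have ik : i + (c - b) = k + (c - a).
    by apply: abs_at_inj; [lia | lia | by rewrite /abs_at ic kc].
  have at_b := @abs_at_eq i.
  exists k; split.
    split=> [|j hj]; first lia.
    by move: (small j hj) (big j hj) (at_b j ltac:(lia) hj); rewrite /abs_at ib /=; lia.
  by left; have -> : k + (b - a) = i by lia.
- by case: (no_opposite_entries _ _ ic kc); lia.
- by case: (no_opposite_entries _ _ kc ic); lia.
- have ik : i = k by apply: abs_at_inj; [lia | lia | by rewrite /abs_at ic kc].
  subst i; have at_b := @abs_at_eq (k + (c - b)).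
  exists (k + (c - b)); split.
    split=> [|j hj]; first lia.
    by move: (small j hj) (big j hj) (at_b j ltac:(lia) hj); rewrite /abs_at ib abszN; lia.
  by right; have -> : k + (c - b) + (b - a) = k + (c - a) by lia.
Qed.

End SignedSequence.

Lemma genome_family_mem n P s : genome_family n P -> s \in P ->
  uniq (map absz s) /\ 0%R \notin s.
Proof.
move=> [_ [_ famP]] sP; have [perm_s _ _] := famP s sP.
split; first by rewrite (perm_uniq perm_s) iota_uniq.
by apply/negP=> /(map_f absz); rewrite (perm_mem perm_s) mem_iota.
Qed.

Lemma conserved_pair n P a c s : conserved n P (a, c) -> a < c ->
  s \in P -> conserved_in s a c.
Proof. by case=> [[/= -> _] | [_ consP] _ /consP]; rewrite ?ltnn. Qed.

Lemma conserved_trim_left n P a b c : genome_family n P -> a < b < c ->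
  conserved n P (a, b) -> conserved n P (a, c) -> conserved n P (b, c).
Proof.
move=> fam abc ab ac; right; split=> [|s sP] /=; first lia.
have [s_uniq s_nz] := genome_family_mem fam sP.
apply: (conserved_in_trim_left s_uniq s_nz abc).
  by apply: (conserved_pair ab) sP; lia.
by apply: (conserved_pair ac) sP; lia.
Qed.

Lemma conserved_trim_right n P a b c : genome_family n P -> a < b < c ->
  conserved n P (b, c) -> conserved n P (a, c) -> conserved n P (a, b).
Proof.
move=> fam abc bc ac; right; split=> [|s sP] /=; first lia.
have [s_uniq s_nz] := genome_family_mem fam sP.
apply: (conserved_in_trim_right s_uniq s_nz abc).
  by apply: (conserved_pair bc) sP; lia.
by apply: (conserved_pair ac) sP; lia.
Qed.

Lemma in_frontiersP n P I f : in_frontiers n P I f ->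
  [/\ I.1 <= f <= I.2, I.1 < f -> conserved n P (I.1, f)
    & f < I.2 -> conserved n P (f, I.2)].
Proof.
by move=> [S [[I1S I2S inI consS] fS]]; split=> [|?|?]; [exact: inI | apply: consS ..].
Qed.

Lemma subinterval_antisym (I J : sinterval) :
  subinterval I J -> subinterval J I -> I = J.
Proof. by case: I J => [a c] [a' c'] [/= ? ?] [/= ? ?]; congr pair; lia. Qed.

Lemma strong_nested n P C D f : strong n P C -> conserved n P D ->
  C.1 <= f <= C.2 -> D.1 <= f <= D.2 -> subinterval C D \/ subinterval D C.
Proof.
by move=> [_ _ noC] consD fC fD; have := noC D consD; rewrite /overlap /subinterval; lia.
Qed.

Lemma frontier_in_container n P I C f : in_frontiers n P I f ->
  is_container n P I C -> C.1 <= f <= C.2.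
Proof. by move=> /in_frontiersP[fI _ _] [_ [IC1 IC2] _]; lia. Qed.

Lemma strong_frontier_left n P C J f : genome_family n P -> strong n P C ->
  in_frontiers n P J f -> C.1 <= f <= C.2 -> C.1 <= J.1.
Proof.
case: C J => p q [a c] fam [/= pq consC noC] /in_frontiersP[/= fJ af _] /= fC.
case: (leqP p a) => // ap; exfalso.
have consaf : conserved n P (a, f) by apply: af; lia.
case: (ltnP f q) => fq; first by apply: (noC _ consaf); rewrite /overlap /=; lia.
have apq : a < p < q by lia.
have consap : conserved n P (a, p).
  by apply: (conserved_trim_right fam apq consC); have <- : f = q by lia.
by apply: (noC _ consap); rewrite /overlap /=; lia.
Qed.

Lemma strong_frontier_right n P C J f : genome_family n P -> strong n P C ->
  in_frontiers n P J f -> C.1 <= f <= C.2 -> J.2 <= C.2.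
Proof.
case: C J => p q [a c] fam [/= pq consC noC] /in_frontiersP[/= fJ _ fc] /= fC.
case: (leqP c q) => // qc; exfalso.
have consfc : conserved n P (f, c) by apply: fc; lia.
case: (ltnP p f) => pf; first by apply: (noC _ consfc); rewrite /overlap /=; lia.
have pqc : p < q < c by lia.
have consqc : conserved n P (q, c).
  by apply: (conserved_trim_left fam pqc consC); have -> : p = f by lia.
by apply: (noC _ consqc); rewrite /overlap /=; lia.
Qed.

Lemma container_eq_of_sub n P I J f C1 C2 : genome_family n P ->
  in_frontiers n P I f -> in_frontiers n P J f ->
  is_container n P I C1 -> is_container n P J C2 -> subinterval C1 C2 -> C1 = C2.
Proof.
move=> fam fI fJ K1 [_ _ minC2] C12; have [strongC1 _ _] := K1.
have fC1 := frontier_in_container fI K1.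
have JC1 : subinterval J C1.
  by split; [exact: strong_frontier_left fJ fC1 | exact: strong_frontier_right fJ fC1].
exact: subinterval_antisym C12 (minC2 _ strongC1 JC1).
Qed.

Theorem lemma8 (n : nat) (P : seq (seq int)) (I J : sinterval) (f : nat)
  (C1 C2 : sinterval) :
  (2 <= n)%N -> genome_family n P ->
  conserved n P I -> conserved n P J ->
  in_frontiers n P I f -> in_frontiers n P J f ->
  is_container n P I C1 -> is_container n P J C2 ->
  C1 = C2.
Proof.
move=> _ fam _ _ fI fJ K1 K2.
have [[strongC1 _ _] [[_ consC2 _] _ _]] := (K1, K2).
have [C12 | C21] := strong_nested strongC1 consC2
  (frontier_in_container fI K1) (frontier_in_container fJ K2).
  exact: container_eq_of_sub fam fI fJ K1 K2 C12.
exact/esym/(container_eq_of_sub fam fJ fI K2 K1 C21).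
Qed.
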